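(* Let $B_N'=\dfrac{\sum_{k=1}^{N}\frac{1}{\log(k+1)}}{\sum_{k=1}^{2N}\frac{1}{\log(k+1)}}$ for $N\in\mathbb N$. Then $B_{N+1}'<B_N'$ for all integers $N\ge 5$.
   Context: $\log$ denotes the logarithm to base $2$. *)

From Stdlib Require Import Reals.
Open Scope R_scope.

Definition log2 (x : R) : R := ln x / ln 2.

Fixpoint S_inv_log (n : nat) : R :=
  match n with
  | O => 0
  | Datatypes.S m => S_inv_log m + / log2 (INR (m + 1) + 1)
  end.

Definition Bprime (N : nat) : R := S_inv_log N / S_inv_log (2 * N).

(* Write [a_k = 1 / log2 (k + 1)] and [A n = a_1 + ... + a_n], so that
   [B'_N = A N / A (2N)]; below, terms are indexed from 0 ([inv_log2_term m = a_(m+1)]).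
   Cross-multiplying, [B'_(N+1) < B'_N] says that the gap
   [D_N = A N (a_(2N+1) + a_(2N+2)) - a_(N+1) A (2N)] is positive, and positivity of
   [D_N] propagates to [D_(N+1)] as soon as [(a_(2N+1) + a_(2N+2)) / a_(N+1)] does
   not decrease.  Termwise, this is the monotonicity of [t |-> ln (t+1) / ln (2t+e)]
   on [t >= 6] for [e = 0, 1], whose derivative has the sign of
   [(2t+e) ln (2t+e) - 2(t+1) ln (t+1)].  The base case [D_5 > 0] is a numerical
   check (the gap is about [1.6e-3 * ln 2 ^ 2]), done with logarithms of the primes
   up to 13 enclosed by the series of [artanh]. *)

From Stdlib Require Import Reals Lra Lia Psatz.
From Coquelicot Require Import Coquelicot.
Open Scope R_scope.

Section PartialSumRatio.

Variable a : nat -> R.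
Hypothesis a_pos : forall k, 0 < a k.

Fixpoint psum (n : nat) : R :=
  match n with O => 0 | S m => psum m + a m end.

Definition psum_ratio (N : nat) : R := psum N / psum (2 * N).

Definition psum_ratio_gap (N : nat) : R :=
  psum N * (a (2 * N) + a (2 * N + 1)) - a N * psum (2 * N).

Lemma psum_nonneg n : 0 <= psum n.
Proof. induction n as [|n IH]; simpl; [lra | pose proof (a_pos n); lra]. Qed.

Lemma psum_pos n : (0 < n)%nat -> 0 < psum n.
Proof.
  destruct n as [|n]; [lia|]. intros _. simpl.
  pose proof (psum_nonneg n); pose proof (a_pos n); lra.
Qed.

Lemma psum_double_succ N : psum (2 * S N) = psum (2 * N) + a (2 * N) + a (2 * N + 1).
Proof. replace (2 * S N)%nat with (S (2 * N + 1)) by lia. simpl. now rewrite Nat.add_1_r. Qed.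

Lemma psum_ratio_succ_lt N :
  (0 < N)%nat -> 0 < psum_ratio_gap N -> psum_ratio (S N) < psum_ratio N.
Proof.
  intros HN Hgap. unfold psum_ratio, psum_ratio_gap in *.
  rewrite psum_double_succ. cbn [psum].
  assert (HU : 0 < psum (2 * N)) by (apply psum_pos; lia).
  pose proof (a_pos (2 * N)); pose proof (a_pos (2 * N + 1)).
  set (A := psum N) in *. set (U := psum (2 * N)) in *.
  set (c := a (2 * N)) in *. set (d := a (2 * N + 1)) in *.
  assert (E : A / U - (A + a N) / (U + c + d)
              = (A * (c + d) - a N * U) / (U * (U + c + d))) by (field; lra).
  assert (0 < (A * (c + d) - a N * U) / (U * (U + c + d)))
    by (apply Rdiv_lt_0_compat; nra).
  lra.
Qed.

Lemma psum_ratio_gap_succ_pos N :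
  a (S N) * (a (2 * N) + a (2 * N + 1)) <= a N * (a (2 * N + 2) + a (2 * N + 3)) ->
  0 < psum_ratio_gap N -> 0 < psum_ratio_gap (S N).
Proof.
  intros Hmono Hgap. unfold psum_ratio_gap in *.
  rewrite psum_double_succ. cbn [psum].
  replace (2 * S N)%nat with (2 * N + 2)%nat by lia.
  replace (2 * N + 2 + 1)%nat with (2 * N + 3)%nat by lia.
  pose proof (psum_nonneg N); pose proof (a_pos N); pose proof (a_pos (S N)).
  set (A := psum N) in *. set (U := psum (2 * N)) in *.
  set (p := a N) in *. set (p' := a (S N)) in *.
  set (c := a (2 * N)) in *. set (d := a (2 * N + 1)) in *.
  set (c' := a (2 * N + 2)) in *. set (d' := a (2 * N + 3)) in *.
  assert (HA : 0 <= A + p) by lra.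
  pose proof (Rmult_le_compat_l _ _ _ HA Hmono).
  (* [p * gap (S N) - p' * gap N = (A + p) * (p * (c' + d') - p' * (c + d))] *)
  assert (p' * (A * (c + d) - p * U) <= p * ((A + p) * (c' + d') - p' * (U + c + d))) by lra.
  nra.
Qed.

Theorem psum_ratio_decreasing N0 :
  (0 < N0)%nat -> 0 < psum_ratio_gap N0 ->
  (forall N, (N0 <= N)%nat ->
     a (S N) * (a (2 * N) + a (2 * N + 1)) <= a N * (a (2 * N + 2) + a (2 * N + 3))) ->
  forall N, (N0 <= N)%nat -> psum_ratio (S N) < psum_ratio N.
Proof.
  intros HN0 Hgap0 Hmono N HN. apply psum_ratio_succ_lt; [lia|].
  induction HN as [|N HN IH]; [exact Hgap0|].
  apply psum_ratio_gap_succ_pos; [apply Hmono|]; assumption.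
Qed.

End PartialSumRatio.

Lemma le_of_derive_nonneg f df a b : a <= b ->
  (forall c, a <= c <= b -> is_derive f c (df c)) ->
  (forall c, a < c < b -> 0 <= df c) -> f a <= f b.
Proof.
  intros Hab Hd Hpos. destruct (Rle_lt_or_eq_dec _ _ Hab) as [Hlt | ->]; [|lra].
  destruct (MVT_cor2 f df a b Hlt) as [c [Hfc Hc]].
  { intros c Hc. apply is_derive_Reals, Hd, Hc. }
  pose proof (Hpos c Hc). nra.
Qed.

Lemma ln_le_sub_1 y : 0 < y -> ln y <= y - 1.
Proof. intros Hy. pose proof (exp_ineq1_le (ln y)). rewrite exp_ln in H; lra. Qed.

Lemma ln_pos_of_gt_1 x : 1 < x -> 0 < ln x.
Proof. intros Hx. rewrite <- ln_1. apply ln_increasing; lra. Qed.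

Definition artanh5 (z : R) : R := z + z ^ 3 / 3 + z ^ 5 / 5.

Lemma ln_artanh_bounds z : 0 <= z <= 1 / 3 ->
  2 * artanh5 z <= ln (1 + z) - ln (1 - z) <= 2 * artanh5 z + z ^ 7 / 3.
Proof.
  intros Hz. unfold artanh5.
  (* The remainder [r] has derivative [2 t^6 / (1 - t^2)], which is at most
     [7 t^6 / 3] as long as [t^2 <= 1/7]. *)
  set (r := fun t => ln (1 + t) - ln (1 - t) - 2 * (t + t ^ 3 / 3 + t ^ 5 / 5)).
  assert (Hr0 : r 0 = 0).
  { unfold r; cbv beta. rewrite Rplus_0_r, Rminus_0_r, ln_1. lra. }
  assert (Hlow : r 0 <= r z).
  { apply le_of_derive_nonneg
      with (f := r) (df := fun t => 2 * t ^ 6 / ((1 + t) * (1 - t))); [lra| |].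
    - intros c Hc. unfold r. auto_derive; [lra|]. field. lra.
    - intros c Hc. apply Rle_mult_inv_pos; nra. }
  assert (Hup : 0 ^ 7 / 3 - r 0 <= z ^ 7 / 3 - r z).
  { apply le_of_derive_nonneg
      with (f := fun t => t ^ 7 / 3 - r t)
           (df := fun t => t ^ 6 * (7 * (1 - t ^ 2) - 6) / (3 * ((1 + t) * (1 - t)))); [lra| |].
    - intros c Hc. unfold r. auto_derive; [lra|]. field. lra.
    - intros c Hc. apply Rle_mult_inv_pos; [apply Rmult_le_pos|]; nra. }
  rewrite Hr0 in Hlow, Hup. unfold r in Hlow, Hup. lra.
Qed.

Lemma ln_sub_ln_bounds a b : 0 < b <= a -> a <= 2 * b ->
  2 * artanh5 ((a - b) / (a + b)) <= ln a - ln b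
  <= 2 * artanh5 ((a - b) / (a + b)) + ((a - b) / (a + b)) ^ 7 / 3.
Proof.
  intros Hab Ha.
  assert (Hz : 0 <= (a - b) / (a + b) <= 1 / 3).
  { split; [apply Rle_mult_inv_pos; lra|].
    apply Rmult_le_reg_r with (a + b); [lra|]. field_simplify; lra. }
  replace (ln a - ln b) with (ln (1 + (a - b) / (a + b)) - ln (1 - (a - b) / (a + b))).
  { apply ln_artanh_bounds, Hz. }
  replace (1 + (a - b) / (a + b)) with (a * (2 / (a + b))) by (field; lra).
  replace (1 - (a - b) / (a + b)) with (b * (2 / (a + b))) by (field; lra).
  assert (0 < 2 / (a + b)) by (apply Rdiv_lt_0_compat; lra).
  rewrite !ln_mult by lra. ring.
Qed.

Ltac ln_sub_ln a b :=
  let H := fresh in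
  pose proof (ln_sub_ln_bounds a b ltac:(lra) ltac:(lra)) as H; unfold artanh5 in H.

Lemma ln_composites :
  ln 4 = ln 2 + ln 2 /\ ln 6 = ln 2 + ln 3 /\ ln 8 = ln 2 + ln 2 + ln 2 /\
  ln 9 = ln 3 + ln 3 /\ ln 10 = ln 2 + ln 5 /\ ln 12 = ln 2 + ln 2 + ln 3.
Proof. repeat split; rewrite <- !ln_mult by lra; f_equal; lra. Qed.

Lemma ln2_bounds : 0.69314 <= ln 2 <= 0.69315.
Proof. ln_sub_ln 3 2. ln_sub_ln 4 3. pose proof ln_composites. lra. Qed.

Lemma ln3_bounds : 1.0986 <= ln 3 <= 1.09862.
Proof. ln_sub_ln 3 2. pose proof ln2_bounds. lra. Qed.

Lemma ln5_bounds : 1.60942 <= ln 5 <= 1.60945.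
Proof. ln_sub_ln 5 4. pose proof ln2_bounds. pose proof ln_composites. lra. Qed.

Lemma ln7_bounds : 1.94589 <= ln 7 <= 1.94593.
Proof.
  ln_sub_ln 7 6. pose proof ln2_bounds. pose proof ln3_bounds. pose proof ln_composites. lra.
Qed.

Lemma ln11_bounds : 2.39787 <= ln 11 <= 2.39792.
Proof.
  ln_sub_ln 11 10. pose proof ln2_bounds. pose proof ln5_bounds. pose proof ln_composites. lra.
Qed.

Lemma ln13_bounds : 2.56492 <= ln 13 <= 2.56497.
Proof.
  ln_sub_ln 13 12. pose proof ln2_bounds. pose proof ln3_bounds. pose proof ln_composites. lra.
Qed.

Lemma Rinv_bounds x lo hi : 0 < lo -> lo <= x <= hi -> / hi <= / x <= / lo.
Proof. intros Hlo Hx. split; apply Rinv_le_contravar; lra. Qed.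

Lemma inv_ln_gap_5 :
  0 < (/ ln 2 + / ln 3 + / ln 4 + / ln 5 + / ln 6) * (/ ln 12 + / ln 13)
      - / ln 7 * (/ ln 2 + / ln 3 + / ln 4 + / ln 5 + / ln 6
                  + / ln 7 + / ln 8 + / ln 9 + / ln 10 + / ln 11).
Proof.
  pose proof ln2_bounds. pose proof ln3_bounds. pose proof ln5_bounds.
  pose proof ln7_bounds. pose proof ln11_bounds. pose proof ln13_bounds.
  destruct ln_composites as (ln4 & ln6 & ln8 & ln9 & ln10 & ln12).
  assert (g2 : / 0.69315 <= / ln 2 <= / 0.69314) by (apply Rinv_bounds; lra).
  assert (g3 : / 1.09862 <= / ln 3 <= / 1.0986) by (apply Rinv_bounds; lra).
  assert (g4 : / (2 * 0.69315) <= / ln 4 <= / (2 * 0.69314)) by (apply Rinv_bounds; lra).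
  assert (g5 : / 1.60945 <= / ln 5 <= / 1.60942) by (apply Rinv_bounds; lra).
  assert (g6 : / (0.69315 + 1.09862) <= / ln 6 <= / (0.69314 + 1.0986))
    by (apply Rinv_bounds; lra).
  assert (g7 : / 1.94593 <= / ln 7 <= / 1.94589) by (apply Rinv_bounds; lra).
  assert (g8 : / (3 * 0.69315) <= / ln 8 <= / (3 * 0.69314)) by (apply Rinv_bounds; lra).
  assert (g9 : / (2 * 1.09862) <= / ln 9 <= / (2 * 1.0986)) by (apply Rinv_bounds; lra).
  assert (g10 : / (0.69315 + 1.60945) <= / ln 10 <= / (0.69314 + 1.60942))
    by (apply Rinv_bounds; lra).
  assert (g11 : / 2.39792 <= / ln 11 <= / 2.39787) by (apply Rinv_bounds; lra).
  assert (g12 : / (2 * 0.69315 + 1.09862) <= / ln 12 <= / (2 * 0.69314 + 1.0986))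
    by (apply Rinv_bounds; lra).
  assert (g13 : / 2.56497 <= / ln 13 <= / 2.56492) by (apply Rinv_bounds; lra).
  set (head := / ln 2 + / ln 3 + / ln 4 + / ln 5 + / ln 6).
  set (tail := / ln 7 + / ln 8 + / ln 9 + / ln 10 + / ln 11).
  assert (Hhead : 4.2537 <= head) by (unfold head; lra).
  assert (Htail : tail <= 2.3013) by (unfold tail; lra).
  assert (Hnew : 0.2783 <= / ln 12 + / ln 13 - / ln 7) by lra.
  (* Regrouped as [head * (g12 + g13 - g7) - g7 * tail], the gap survives the
     interval bounds. *)
  assert (Hprod1 : 4.2537 * 0.2783 <= head * (/ ln 12 + / ln 13 - / ln 7))
    by (apply Rmult_le_compat; lra).
  assert (Hprod2 : / ln 7 * tail <= 0.5140 * 2.3013)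
    by (apply Rmult_le_compat; unfold tail in *; lra).
  replace (head + / ln 7 + / ln 8 + / ln 9 + / ln 10 + / ln 11) with (head + tail)
    by (unfold tail; ring).
  lra.
Qed.

Lemma xlnx_succ_le_double t : 6 <= t -> (t + 1) * ln (t + 1) <= t * ln (2 * t).
Proof.
  intros Ht. rewrite ln_mult by lra.
  assert (Hstep : t * (ln (t + 1) - ln t) <= t * ((t + 1) / t - 1)).
  { pose proof (ln_le_sub_1 ((t + 1) / t) ltac:(apply Rdiv_lt_0_compat; lra)) as H.
    rewrite ln_div in H by lra. apply Rmult_le_compat_l; lra. }
  replace (t * ((t + 1) / t - 1)) with 1 in Hstep by (field; lra).
  assert (Hlin : ln (t + 1) - ln 7 <= (t + 1) / 7 - 1).
  { pose proof (ln_le_sub_1 ((t + 1) / 7) ltac:(lra)) as H. rewrite ln_div in H by lra. lra. }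
  assert (Hln2 : 0.69314 * t <= ln 2 * t)
    by (apply Rmult_le_compat_r; [lra | apply ln2_bounds]).
  (* [(t + 1) ln (t + 1) <= t ln t + 1 + ln (t + 1)] and
     [1 + ln (t + 1) <= ln 7 + (t + 1) / 7 <= t ln 2] for [t >= 6]. *)
  pose proof ln7_bounds. lra.
Qed.

Lemma xlnx_shift_le e t : 0 <= e -> 6 <= t ->
  2 * (t + 1) * ln (t + 1) <= (2 * t + e) * ln (2 * t + e).
Proof.
  intros He Ht. pose proof (xlnx_succ_le_double t Ht).
  assert (ln (2 * t) <= ln (2 * t + e)) by (apply ln_le; lra).
  assert (0 < ln (2 * t)) by (apply ln_pos_of_gt_1; lra).
  nra.
Qed.

Lemma ln_ratio_succ_le e t : 0 <= e -> 6 <= t ->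
  ln (t + 1) / ln (2 * t + e) <= ln (t + 1 + 1) / ln (2 * (t + 1) + e).
Proof.
  intros He Ht.
  apply le_of_derive_nonneg with (f := fun s => ln (s + 1) / ln (2 * s + e))
    (df := fun s => ((2 * s + e) * ln (2 * s + e) - 2 * (s + 1) * ln (s + 1))
                    / ((s + 1) * (2 * s + e) * ln (2 * s + e) ^ 2)); [lra| |].
  - intros s Hs. assert (0 < ln (2 * s + e)) by (apply ln_pos_of_gt_1; lra).
    auto_derive; [repeat split; lra|]. field. repeat split; lra.
  - intros s Hs. assert (0 < ln (2 * s + e)) by (apply ln_pos_of_gt_1; lra).
    apply Rle_mult_inv_pos.
    + pose proof (xlnx_shift_le e s He ltac:(lra)). lra.
    + apply Rmult_lt_0_compat; [nra | apply pow_lt; lra].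
Qed.

Lemma inv_ln_cross e t : 0 <= e -> 6 <= t ->
  / ln (t + 2) * / ln (2 * t + e) <= / ln (t + 1) * / ln (2 * t + 2 + e).
Proof.
  intros He Ht. pose proof (ln_ratio_succ_le e t He Ht) as Hratio.
  replace (t + 1 + 1) with (t + 2) in Hratio by ring.
  replace (2 * (t + 1) + e) with (2 * t + 2 + e) in Hratio by ring.
  assert (0 < ln (t + 1)) by (apply ln_pos_of_gt_1; lra).
  assert (0 < ln (t + 2)) by (apply ln_pos_of_gt_1; lra).
  assert (0 < ln (2 * t + e)) by (apply ln_pos_of_gt_1; lra).
  assert (0 < ln (2 * t + 2 + e)) by (apply ln_pos_of_gt_1; lra).
  replace (/ ln (t + 2) * / ln (2 * t + e))
    with (ln (t + 1) / ln (2 * t + e) * / (ln (t + 1) * ln (t + 2))) by (field; lra).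
  replace (/ ln (t + 1) * / ln (2 * t + 2 + e))
    with (ln (t + 2) / ln (2 * t + 2 + e) * / (ln (t + 1) * ln (t + 2))) by (field; lra).
  apply Rmult_le_compat_r; [apply Rlt_le, Rinv_0_lt_compat; nra | exact Hratio].
Qed.

Lemma inv_ln_pair_cross t : 6 <= t ->
  / ln (t + 2) * (/ ln (2 * t) + / ln (2 * t + 1))
  <= / ln (t + 1) * (/ ln (2 * t + 2) + / ln (2 * t + 3)).
Proof.
  intros Ht. pose proof (inv_ln_cross 0 t ltac:(lra) Ht) as H0.
  pose proof (inv_ln_cross 1 t ltac:(lra) Ht) as H1.
  rewrite !Rplus_0_r in H0. replace (2 * t + 2 + 1) with (2 * t + 3) in H1 by ring.
  lra.
Qed.

Definition inv_log2_term (m : nat) : R := / log2 (INR (m + 1) + 1).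

Lemma S_inv_log_psum n : S_inv_log n = psum inv_log2_term n.
Proof. induction n as [|n IH]; simpl; [reflexivity | now rewrite IH]. Qed.

Lemma Bprime_psum_ratio N : Bprime N = psum_ratio inv_log2_term N.
Proof. unfold Bprime, psum_ratio. now rewrite !S_inv_log_psum. Qed.

Lemma inv_log2_term_eq m : inv_log2_term m = ln 2 * / ln (INR (m + 2)).
Proof.
  unfold inv_log2_term, log2. rewrite Rinv_div.
  replace (INR (m + 1) + 1) with (INR (m + 2)) by (rewrite !plus_INR; simpl; ring).
  reflexivity.
Qed.

Lemma inv_log2_term_pos m : 0 < inv_log2_term m.
Proof.
  rewrite inv_log2_term_eq. pose proof (pos_INR m).
  apply Rmult_lt_0_compat; [|apply Rinv_0_lt_compat]; apply ln_pos_of_gt_1; [lra|].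
  rewrite plus_INR. simpl INR. lra.
Qed.

Lemma inv_log2_gap_5 : 0 < psum_ratio_gap inv_log2_term 5.
Proof.
  unfold psum_ratio_gap. cbn [psum Nat.mul Nat.add].
  rewrite !inv_log2_term_eq, !INR_IZR_INZ. simpl Z.of_nat.
  assert (Hl2 : 0 < ln 2 * ln 2) by (pose proof ln2_bounds; nra).
  pose proof (Rmult_lt_0_compat _ _ Hl2 inv_ln_gap_5). lra.
Qed.

Lemma inv_log2_term_ratio_mono N : (5 <= N)%nat ->
  inv_log2_term (S N) * (inv_log2_term (2 * N) + inv_log2_term (2 * N + 1))
  <= inv_log2_term N * (inv_log2_term (2 * N + 2) + inv_log2_term (2 * N + 3)).
Proof.
  intros HN. rewrite !inv_log2_term_eq.
  set (t := INR N + 1).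
  assert (Ht : 6 <= t) by (apply le_INR in HN; unfold t; simpl in HN; lra).
  replace (INR (S N + 2)) with (t + 2) by (unfold t; rewrite plus_INR, S_INR; simpl; ring).
  replace (INR (2 * N + 2)) with (2 * t) by (unfold t; rewrite plus_INR, mult_INR; simpl; ring).
  replace (INR (2 * N + 1 + 2)) with (2 * t + 1)
    by (unfold t; rewrite !plus_INR, mult_INR; simpl; ring).
  replace (INR (N + 2)) with (t + 1) by (unfold t; rewrite plus_INR; simpl; ring).
  replace (INR (2 * N + 2 + 2)) with (2 * t + 2)
    by (unfold t; rewrite !plus_INR, mult_INR; simpl; ring).
  replace (INR (2 * N + 3 + 2)) with (2 * t + 3)
    by (unfold t; rewrite !plus_INR, mult_INR; simpl; ring).
  pose proof (inv_ln_pair_cross t Ht) as Hcross.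
  apply Rmult_le_compat_l with (r := ln 2 * ln 2) in Hcross; [lra | nra].
Qed.

Theorem proposition3 : forall N : nat, (5 <= N)%nat -> Bprime (N + 1) < Bprime N.
Proof.
  intros N HN. rewrite !Bprime_psum_ratio, Nat.add_1_r.
  apply (psum_ratio_decreasing _ inv_log2_term_pos 5); try lia.
  - exact inv_log2_gap_5.
  - exact inv_log2_term_ratio_mono.
Qed.
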